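(* Let $a,n$ be coprime positive integers and let $\pi\in S(\mathbb{Z}_n)$ be given by $\pi(x)=ax$. Then $t([\pi])=n-\sum_{d\mid n}\frac{\varphi(d)}{\mathrm{ord}_d(a)}$, the sum running over positive divisors $d$ of $n$.
   Context: $S(\mathbb{Z}_n)$ is the set of bijections $\mathbb{Z}_n\to\mathbb{Z}_n$. For $\pi\in S(\mathbb{Z}_n)$, $\mathrm{cyc}(\pi)$ is the number of cycles (including fixed points) of $\pi$, $t(\pi)=n-\mathrm{cyc}(\pi)$, $[\pi]=\{x\mapsto \pi(x+b): b\in\mathbb{Z}_n\}$ and $t([\pi])=\min_{\sigma\in[\pi]}t(\sigma)$. $\varphi$ is Euler's totient function and $\mathrm{ord}_d(a)$ is the multiplicative order of $a\bmod d$ in $\mathbb{Z}_d^\times$ (with $\mathrm{ord}_1(a)=1$). *)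

From mathcomp Require Import all_boot all_order all_algebra.
Set Implicit Arguments. Unset Strict Implicit. Unset Printing Implicit Defensive.

(* Z_n is represented by 'I_n (residues 0..n-1); maps are computed mod n. *)
Definition pos_of (n : nat) (x : 'I_n) : 0 < n :=
  leq_ltn_trans (leq0n x) (ltn_ord x).

Definition mulZn (n a : nat) (x : 'I_n) : 'I_n :=
  Ordinal (ltn_pmod (a * x) (pos_of x)).

Definition addZn (n : nat) (b : 'I_n) (x : 'I_n) : 'I_n :=
  Ordinal (ltn_pmod (x + b) (pos_of x)).

(* number of cycles (incl. fixed points) of a map f : 'I_n -> 'I_n;
   for a bijection this is the number of f-orbits *)
Definition cyc (n : nat) (f : 'I_n -> 'I_n) : nat := fcard f 'I_n.

Definition tperm (n : nat) (f : 'I_n -> 'I_n) : nat := n - cyc f.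

(* t([pi]) = min over b in Z_n of t(x |-> pi(x + b)); all values are <= n,
   so n is a harmless initial value for the minimum (and 'I_n is nonempty
   when n > 0). *)
Definition tclass (n : nat) (f : 'I_n -> 'I_n) : nat :=
  \big[minn/n]_(b : 'I_n) tperm (fun x => f (addZn b x)).

(* ord_d(a): least k >= 1 with a^k = 1 (mod d); ord_1(a) = 1.
   For a coprime to d such a k exists and k <= phi(d) <= d, so searching
   k in 1..d is exhaustive. *)
Definition ord_mod (d a : nat) : nat :=
  head 0 [seq k <- iota 1 d | a ^ k == 1 %[mod d]].

From mathcomp Require Import all_boot all_order all_algebra.
From mathcomp Require Import cyclic zify.
Set Implicit Arguments. Unset Strict Implicit. Unset Printing Implicit Defensive.
Import Order.TTheory GRing.Theory Num.Theory.

(* Every shift x |-> a (x + b) is the affine map x |-> a x + c with c = a b.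
   For a permutation f of a finite set and any common multiple L of its cycle
   lengths, Burnside's lemma for the cyclic group generated by f reads
   cyc f * L = sum_{1 <= k <= L} #Fix(f^k).  The fixed points of the k-th
   iterate of x |-> a x + c, if there are any, are a translate of those of
   x |-> a^k x, so no shift has more cycles than x |-> a x itself and
   t([pi]) = n - cyc(pi).  Finally cyc(pi) = sum_x 1 / |orbit of x|; the orbit
   of x has length ord_d(a) for d = n / gcd(x, n), and exactly phi(d) residues
   x give the value d. *)

Section Cycles.
Variables (T : finType) (f : T -> T).
Hypothesis f_inj : injective f.

Lemma iter_eq_dvd_order x k : (iter k f x == x) = (order f x %| k).
Proof.
have order_gt0 := order_gt0 f x.
rewrite {1}(divn_eq k (order f x)) addnC iterD iterM.
rewrite (iter_fix _ (iter_order f_inj x)) /dvdn.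
apply/eqP/eqP => [fixed | ->] //.
by rewrite -(findex_iter (ltn_pmod k order_gt0)) fixed findex0.
Qed.

Lemma order_dvd_fact x : order f x %| #|T|`!.
Proof. by rewrite dvdn_fact // order_gt0 max_card. Qed.

Lemma sum_div_order L : (forall x, order f x %| L) ->
  \sum_x L %/ order f x = fcard f T * L.
Proof.
move=> order_dvd; have sym_f : connect_sym (frel f) := fconnect_sym f_inj.
rewrite (partition_big (froot f) (froots f)) => [|x _]; last exact: roots_root.
rewrite /n_comp_mem -sum1_card big_distrl /=.
apply: eq_big => [r | r /eqP root_r]; first by rewrite !inE andbT.
have order_root x : froot f x = r -> order f x = order f r.
  by move=> <-; rewrite /order (eq_card (same_connect sym_f (connect_root _ x))).
rewrite (eq_bigr (fun=> L %/ order f r)) => [|x /eqP /order_root -> //].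
rewrite sum_nat_const mul1n (_ : #|_| = order f r); first by rewrite mulnC divnK.
apply: eq_card => x; apply/idP/idP => [/eqP <- | connect_rx].
  by rewrite inE sym_f connect_root.
by apply/eqP/eqP; rewrite -root_r root_connect // sym_f.
Qed.

Lemma sum_card_fixed_iter L : (forall x, order f x %| L) ->
  \sum_(1 <= k < L.+1) #|[pred x | iter k f x == x]| = fcard f T * L.
Proof.
move=> order_dvd; rewrite -sum_div_order //.
under eq_bigr => k _ do rewrite -sum1_card big_mkcond /=.
rewrite exchange_big /=; apply: eq_bigr => x _.
by rewrite divn_count_dvd; apply: eq_bigr => k _; rewrite inE iter_eq_dvd_order.
Qed.

Lemma fcard_sum_inv_order (R : numFieldType) :
  ((fcard f T)%:R = \sum_x (order f x)%:R^-1 :> R)%R.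
Proof.
have fact_neq0 : (#|T|`!%:R != 0 :> R)%R by rewrite pnatr_eq0 -lt0n fact_gt0.
apply: (mulIf fact_neq0).
rewrite -natrM -(sum_div_order order_dvd_fact) natr_sum big_distrl /=.
by apply: eq_bigr => x _; rewrite natf_div ?order_dvd_fact // mulrC.
Qed.

End Cycles.

Lemma leq_fcard (T : finType) (f g : T -> T) : injective f -> injective g ->
  (forall k, #|[pred x | iter k f x == x]| <= #|[pred x | iter k g x == x]|) ->
  fcard f T <= fcard g T.
Proof.
move=> f_inj g_inj le_fixed; rewrite -(leq_pmul2r (fact_gt0 #|T|)).
rewrite -(sum_card_fixed_iter f_inj (order_dvd_fact f)).
rewrite -(sum_card_fixed_iter g_inj (order_dvd_fact g)).
by apply: leq_sum => k _; apply: le_fixed.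
Qed.

Lemma eqn_modMr_coprime d m p q : coprime m d ->
  (p * m == q * m %[mod d]) = (p == q %[mod d]).
Proof.
move=> m_coprime; wlog le_qp : p q / q <= p.
  move=> wlog_le; case/orP: (leq_total q p) => /wlog_le // eq_qp.
  by rewrite eq_sym eq_qp eq_sym.
rewrite !eqn_mod_dvd ?leq_mul2r ?le_qp ?orbT // -mulnBl Gauss_dvdl //.
by rewrite coprime_sym.
Qed.

Lemma eqn_mod_ord n (x y : 'I_n) : (x == y %[mod n]) = (x == y).
Proof. by rewrite !modn_small. Qed.

Lemma leq_totient n : totient n <= n.
Proof.
rewrite totient_count_coprime -{3}[n]subn0 -[n - 0]muln1 -sum_nat_const_nat.
by apply: leq_sum => i _; apply: leq_b1.
Qed.

Lemma ord_mod_eq d a k : 0 < k <= d ->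
  (forall j, (a ^ j == 1 %[mod d]) = (k %| j)) -> ord_mod d a = k.
Proof.
case/andP=> k_gt0 le_kd unit_dvd; rewrite /ord_mod (eq_filter unit_dvd).
have -> : d = k.-1 + (d - k).+1 by lia.
rewrite iotaD filter_cat add1n prednK //=.
have -> : [seq j <- iota 1 k.-1 | k %| j] = [::].
  apply/eqP; rewrite -[_ == _]negbK -has_filter; apply/hasPn => j.
  by rewrite mem_iota => /andP[j_gt0 lt_jk]; apply/negP => /(dvdn_leq j_gt0); lia.
by rewrite dvdnn.
Qed.

Definition affZn n (a c : nat) (x : 'I_n) : 'I_n :=
  Ordinal (ltn_pmod (a * x + c) (pos_of x)).

Section AffineZn.
Variables (n a : nat).

Lemma mulZn_affZn0 : @mulZn n a =1 affZn a 0.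
Proof. by move=> x; apply: val_inj; rewrite /= addn0. Qed.

Lemma mulZn_addZn b : (fun x => @mulZn n a (addZn b x)) =1 affZn a (a * b).
Proof. by move=> x; apply: val_inj; rewrite /= modnMmr mulnDr. Qed.

Lemma iter_affZn_add c k (x y z : 'I_n) : x = y + z %[mod n] ->
  iter k (affZn a c) x = iter k (affZn a c) y + iter k (affZn a 0) z %[mod n].
Proof.
elim: k => [|k IH] //= /IH eq_xyz.
rewrite !modn_mod addn0 modnDm -modnDml -modnMmr eq_xyz.
by rewrite modnMmr modnDml mulnDr addnAC.
Qed.

Hypothesis a_coprime : coprime a n.

Lemma affZn_inj c : injective (@affZn n a c).
Proof.
move=> x y /(congr1 val) /eqP /=.
by rewrite eqn_modDr ![a * _]mulnC eqn_modMr_coprime // eqn_mod_ord => /eqP.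
Qed.

Lemma mulZn_inj : injective (@mulZn n a).
Proof. by move=> x y; rewrite !mulZn_affZn0 => /affZn_inj. Qed.

Lemma card_fixed_iter_affZn c k :
  #|[pred x | iter k (@affZn n a c) x == x]|
    <= #|[pred x | iter k (@affZn n a 0) x == x]|.
Proof.
case: (pickP [pred x | iter k (@affZn n a c) x == x]) => [x0 /eqP fixed_x0 | none].
  have n_gt0 := pos_of x0.
  pose z (x : 'I_n) : 'I_n := Ordinal (ltn_pmod (x + (n - x0)) n_gt0).
  have x_x0z (x : 'I_n) : x = x0 + z x %[mod n].
    by rewrite modnDmr addnCA subnKC ?modnDr // ltnW.
  rewrite -(card_in_imset (f := z)) => [|x y _ _ eq_z]; last first.
    by apply/eqP; rewrite -eqn_mod_ord x_x0z eq_z -x_x0z.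
  apply/subset_leq_card/subsetP => _ /imsetP[x /eqP fixed_x ->].
  rewrite inE -eqn_mod_ord -(eqn_modDl x0) -x_x0z eq_sym.
  by have := iter_affZn_add c k (x_x0z x); rewrite fixed_x fixed_x0 => ->.
by rewrite eq_card0.
Qed.

Lemma tclass_mulZn : 0 < n -> tclass (@mulZn n a) = n - cyc (@mulZn n a).
Proof.
move=> n_gt0; pose b0 : 'I_n := Ordinal n_gt0.
have shift0 : (fun x => mulZn a (addZn b0 x)) =1 @mulZn n a.
  by move=> x; rewrite mulZn_addZn muln0 mulZn_affZn0.
have cyc_shift_le (b : 'I_n) : cyc (fun x => mulZn a (addZn b x)) <= cyc (@mulZn n a).
  rewrite /cyc (eq_fcard (mulZn_addZn b)) (eq_fcard mulZn_affZn0).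
  exact: leq_fcard (@affZn_inj _) (@affZn_inj _) (card_fixed_iter_affZn _).
rewrite /tclass; apply/eqP; rewrite eqn_leq; apply/andP; split.
  rewrite -minEnat; apply: leq_trans (bigmin_le n b0 _) _.
  by rewrite /tperm /cyc (eq_fcard shift0).
apply: (big_ind (fun m => n - cyc (@mulZn n a) <= m)) => [|x y|b _].
- exact: leq_subr.
- by rewrite leq_min => -> ->.
- exact: leq_sub2l.
Qed.

End AffineZn.

Section MulZnOrder.
Variables (n a : nat).

Lemma iter_mulZn k (x : 'I_n) : val (iter k (mulZn a) x) = a ^ k * x %% n.
Proof.
elim: k => [|k IH] /=; first by rewrite mul1n modn_small.
by rewrite IH modnMmr mulnA -expnS.
Qed.

Lemma iter_mulZn_fixed k (x : 'I_n) :
  (iter k (mulZn a) x == x) = (a ^ k == 1 %[mod n %/ gcdn x n]).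
Proof.
have n_gt0 := pos_of x; set e := gcdn x n; set d := n %/ e.
have e_gt0 : 0 < e by rewrite gcdn_gt0 n_gt0 orbT.
have def_n : n = e * d by rewrite mulnC divnK ?dvdn_gcdr.
have def_x : val x = e * (x %/ e) by rewrite mulnC divnK ?dvdn_gcdl.
have x_coprime : coprime (x %/ e) d.
  by rewrite /coprime -(eqn_pmul2l e_gt0) muln1 muln_gcdr -def_x -def_n.
rewrite -val_eqE iter_mulZn -[X in _ == X](modn_small (ltn_ord x)) def_x.
rewrite [X in _ %% X]def_n [X in _ == _ %% X]def_n mulnCA -!muln_modr //.
by rewrite eqn_pmul2l // -{2}[x %/ e]mul1n eqn_modMr_coprime.
Qed.

Hypothesis a_coprime : coprime a n.

Lemma order_mulZn (x : 'I_n) : order (mulZn a) x = ord_mod (n %/ gcdn x n) a.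
Proof.
have n_gt0 := pos_of x; set d := n %/ gcdn x n.
have d_dvd_n : d %| n by rewrite dvdn_div ?dvdn_gcdr.
have d_gt0 : 0 < d := dvdn_gt0 n_gt0 d_dvd_n.
have fixed_dvd j : (a ^ j == 1 %[mod d]) = (order (mulZn a) x %| j).
  by rewrite -iter_mulZn_fixed iter_eq_dvd_order //; apply: mulZn_inj.
have order_le : order (mulZn a) x <= totient d.
  apply: dvdn_leq; first by rewrite totient_gt0.
  by rewrite -fixed_dvd Euler_exp_totient // (coprime_dvdr d_dvd_n).
symmetry; apply: ord_mod_eq fixed_dvd.
by rewrite order_gt0 (leq_trans order_le) ?leq_totient.
Qed.

End MulZnOrder.

Lemma card_ord_pred n (P : pred nat) : #|[pred x : 'I_n | P x]| = count P (iota 0 n).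
Proof. by rewrite cardE /enum_mem -enumT size_filter -val_enum_ord count_map. Qed.

Lemma card_div_gcdn_eq n d : 0 < n -> d %| n ->
  #|[pred x : 'I_n | n %/ gcdn x n == d]| = totient d.
Proof.
move=> n_gt0 d_dvd_n; have d_gt0 := dvdn_gt0 n_gt0 d_dvd_n.
set e := n %/ d; have def_n : n = e * d by rewrite divnK.
have e_gt0 : 0 < e by move: n_gt0; rewrite def_n muln_gt0 => /andP[].
have mulI : injective (muln e) := can_inj (g := divn^~ e) (fun m => mulKn m e_gt0).
have totient_count : totient d = count (coprime d) (iota 0 d).
  by rewrite totient_count_coprime -sum1_count [RHS]big_mkcond /index_iota subn0.
rewrite (card_ord_pred n (fun x => n %/ gcdn x n == d)) totient_count.
rewrite -!size_filter -[RHS](size_map (muln e)); apply/perm_size/uniq_perm.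
- exact: filter_uniq (iota_uniq _ _).
- by rewrite (map_inj_uniq mulI); exact: filter_uniq (iota_uniq _ _).
move=> x; rewrite mem_filter mem_iota add0n /=.
apply/andP/mapP => [[/eqP index_x lt_xn] | [u]].
  have gcd_x : gcdn x n = e.
    by rewrite /e -index_x divnA ?dvdn_gcdr // mulKn // gcdn_gt0 n_gt0 orbT.
  have def_x : x = e * (x %/ e) by rewrite mulnC divnK // -gcd_x dvdn_gcdl.
  exists (x %/ e) => //; rewrite mem_filter mem_iota add0n /=.
  rewrite -(ltn_pmul2l e_gt0) -def_x -def_n lt_xn coprime_sym /coprime.
  by rewrite -(eqn_pmul2l e_gt0) muln1 muln_gcdr -def_x -def_n gcd_x eqxx.
rewrite mem_filter mem_iota add0n /= => /andP[/eqP coprime_du lt_ud] ->.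
by rewrite def_n ltn_pmul2l // -muln_gcdr gcdnC coprime_du muln1 mulKn.
Qed.

Local Open Scope ring_scope.

Lemma sum_div_gcdn (V : nmodType) n (H : nat -> V) : (0 < n)%N ->
  \sum_(x : 'I_n) H (n %/ gcdn x n)%N = \sum_(d <- divisors n) H d *+ totient d.
Proof.
move=> n_gt0.
have index_divisor (x : 'I_n) :
    H (n %/ gcdn x n)%N = \sum_(d <- divisors n | d == (n %/ gcdn x n)%N) H d.
  rewrite -big_filter filter_pred1_uniq ?divisors_uniq ?big_seq1 //.
  by rewrite -dvdn_divisors // dvdn_div ?dvdn_gcdr.
rewrite (eq_bigr _ (fun x _ => index_divisor x)) (exchange_big_dep xpredT) //=.
apply: eq_big_seq => d; rewrite -dvdn_divisors // => d_dvd_n.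
rewrite sumr_const -(card_div_gcdn_eq n_gt0 d_dvd_n); congr (_ *+ _).
by apply: eq_card => x; rewrite !inE eq_sym.
Qed.

Lemma cyc_mulZn (R : numFieldType) n a : coprime a n -> (0 < n)%N ->
  (cyc (@mulZn n a))%:R = \sum_(d <- divisors n) (totient d)%:R / (ord_mod d a)%:R :> R.
Proof.
move=> a_coprime n_gt0; rewrite /cyc fcard_sum_inv_order; last exact: mulZn_inj.
under eq_bigr => x _ do rewrite order_mulZn //.
rewrite (sum_div_gcdn (fun d => (ord_mod d a)%:R^-1)) //.
by apply: eq_bigr => d _; rewrite mulr_natl.
Qed.

Theorem proposition3p3 (a n : nat) (ha : (0 < a)%N) (hn : (0 < n)%N)
  (hcop : coprime a n) :
  (tclass (@mulZn n a))%:R =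
    n%:R - \sum_(d <- divisors n) ((totient d)%:R / (ord_mod d a)%:R) :> rat.
Proof.
have cyc_le_n : (cyc (@mulZn n a) <= n)%N.
  by rewrite -[n in (_ <= n)%N]card_ord max_card.
by rewrite tclass_mulZn // natrB // cyc_mulZn.
Qed.
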